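(* Let $\Delta$ be a simplicial complex of subsets of $\{1,\dots,n\}$ and let $f=X_\alpha X_\beta-X_\gamma X_\delta\in Q_\Delta$ be a binomial such that $X_\alpha$ and $X_\gamma$ are both entries of the same margin $\mathscr J\in\Delta$ (i.e. $\{j:\alpha_j\neq\bullet\}=\{j:\gamma_j\ne\bullet\}=\mathscr J$), and let $\mathcal K=\{j:\beta_j\ne\bullet\}$ be the margin of which $X_\beta$ is an entry. Then $L_{\mathscr J\cap\mathcal K}\cdot\tau_\Delta(f)\subseteq I_\Delta$.
   Context: $\mathbb K$ is a field, $a_1,\dots,a_n$ positive integers, $R=\mathbb K[x_{i_1,\dots,i_n}:1\le i_j\le a_j]$, $A=(x_{i_1,\dots,i_n})$ the generic table. For a tuple $\sigma$ with $\sigma_j\in\{1,\dots,a_j\}\cup\{+\}$, $x_\sigma$ is the sum of all $x_{i_1,\dots,i_n}$ with $i_j=\sigma_j$ whenever $\sigma_j\ne+$. For $\mathscr J=\{j_1<\dots<j_m\}\subseteq\{1,\dots,n\}$, the margin $A_{\mathscr J}$ is the $a_{j_1}\times\dots\times a_{j_m}$ table whose $(i_1,\dots,i_m)$ entry is $x_\sigma$ with $\sigma_{j_r}=i_r$ and $\sigma_j=+$ for $j\notin\mathscr J$; $L_{\mathscr J}\subseteq R$ is the ideal generated by the entries of $A_{\mathscr J}$ (so $L_\emptyset=(x_{+,\dots,+})$). For a table $B$ with entries in $R$, $I(B)$ is the ideal generated by all generalized $2\times2$ minors of $B$ (determinants $\det\begin{pmatrix} b_{i} & b_{j_1,\dots,i_l,\dots,j_m}\\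 b_{i_1,\dots,j_l,\dots,i_m} & b_{j}\end{pmatrix}$ interchanging one coordinate $l$), and $I_\Delta=\sum_{\mathscr J\in\Delta}I(A_{\mathscr J})$. A simplicial complex is a nonempty family of subsets of $\{1,\dots,n\}$ closed under subsets. $S_\Delta$ is the polynomial ring over $\mathbb K$ in variables $X_\sigma$ for tuples $\sigma$ with $\sigma_j\in\{1,\dots,a_j\}\cup\{\bullet\}$ and $\{j:\sigma_j\ne\bullet\}\in\Delta$; $X_\sigma$ is said to be an entry of the margin $\{j:\sigma_j\ne\bullet\}$. $\tau_\Delta:S_\Delta\to R$ sends $X_\sigma\mapsto x_{\sigma''}$ ($\bullet$ replaced by $+$). $\eta_\Delta:S_\Delta\to\mathbb K[y_{j,i}:1\le j\le n,\ i\in\{1,\dots,a_j\}\cup\{\bullet\}]$ (the $y_{j,\bullet}$ being independent variables) sends $X_\sigma\mapsto\prod_{j}y_{j,\sigma_j}$, and $Q_\Delta=\ker\eta_\Delta$. *)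

From HB Require Import structures.
From mathcomp Require Import all_boot all_order all_algebra.
From mathcomp Require Import mpoly.

Import GRing.Theory.
Local Open Scope ring_scope.

(* Coordinates j range over 'I_n (standing for {1,...,n}); the j-th index
   ranges over 'I_(a j) (standing for {1,...,a_j}). *)

Definition cell (n : nat) (a : 'I_n -> nat) : finType := {dffun forall j : 'I_n, 'I_(a j)}.
(* tuples sigma with sigma_j in {1..a_j} u {bullet};  None = bullet (= + ) *)
Definition tup (n : nat) (a : 'I_n -> nat) : finType := {dffun forall j : 'I_n, option 'I_(a j)}.

Definition Rpoly (K : fieldType) n a := {mpoly K[#|cell n a|]}.
Definition xv (K : fieldType) n a (c : cell n a) : Rpoly K n a := 'X_(enum_rank c).

Definition supp n a (s : tup n a) : {set 'I_n} := [set j | s j != None].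

Definition matches n a (s : tup n a) (c : cell n a) : bool :=
  [forall j, if s j is Some i then c j == i else true].

Definition xm (K : fieldType) n a (s : tup n a) : Rpoly K n a :=
  \sum_(c : cell n a | matches n a s c) xv K n a c.

(* the ring S (variables X_sigma for all tuples sigma; S_Delta is the
   subring on the sigma with support in Delta) *)
Definition Spoly (K : fieldType) n a := {mpoly K[#|tup n a|]}.
Definition XS (K : fieldType) n a (s : tup n a) : Spoly K n a := 'X_(enum_rank s).

Definition tau (K : fieldType) n a (p : Spoly K n a) : Rpoly K n a :=
  mmap (fun k : K => k%:MP) (fun i => xm K n a (enum_val i)) p.

Definition ytype n (a : 'I_n -> nat) : finType := {j : 'I_n & option 'I_(a j)}.
Definition Ypoly (K : fieldType) n a := {mpoly K[#|ytype n a|]}.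
Definition yv (K : fieldType) n a (j : 'I_n) (i : option 'I_(a j)) : Ypoly K n a :=
  'X_(enum_rank (Tagged (fun j => option 'I_(a j)) i : ytype n a)).

Definition eta (K : fieldType) n a (p : Spoly K n a) : Ypoly K n a :=
  mmap (fun k : K => k%:MP)
       (fun i => \prod_(j < n) yv K n a j ((enum_val i : tup n a) j)) p.

Definition inQ (K : fieldType) n a (p : Spoly K n a) : Prop := eta K n a p = 0.

Definition genI (T : comRingType) (G : T -> Prop) (p : T) : Prop :=
  exists s : seq (T * T), (forall q, q \in s -> G q.2) /\
                          p = \sum_(q <- s) q.1 * q.2.

Definition Lmarg (K : fieldType) n a (J : {set 'I_n}) : Rpoly K n a -> Prop :=
  genI _ (fun p => exists s : tup n a, supp n a s = J /\ p = xm K n a s).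

Definition swapc n a (s r : tup n a) (l : 'I_n) : tup n a :=
  [ffun j => if j == l then r j else s j].

(* generalized 2x2 minor  det [[b_s, b_{r with l-coord of s}],
                                [b_{s with l-coord of r}, b_r]] *)
Definition minor2 (K : fieldType) n a (s r : tup n a) (l : 'I_n) : Rpoly K n a :=
  xm K n a s * xm K n a r - xm K n a (swapc n a r s l) * xm K n a (swapc n a s r l).

Definition IA (K : fieldType) n a (J : {set 'I_n}) : Rpoly K n a -> Prop :=
  genI _ (fun p => exists (s r : tup n a) (l : 'I_n),
          [/\ supp n a s = J, supp n a r = J, l \in J & p = minor2 K n a s r l]).

(* I_Delta = sum_{J in Delta} I(A_J) (ideal generated by their union) *)
Definition IDelta (K : fieldType) n a (D : {set {set 'I_n}}) : Rpoly K n a -> Prop :=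
  genI _ (fun p => exists J, J \in D /\ IA K n a J p).

Definition simplicial n (D : {set {set 'I_n}}) : Prop :=
  D != set0 /\ (forall J J' : {set 'I_n}, J \in D -> J' \subset J -> J' \in D).

From Pilot Require Import Defs.
From HB Require Import structures.
From mathcomp Require Import all_boot all_order all_algebra.
From mathcomp Require Import mpoly.
From mathcomp Require Import ring.

(* Write [r[l <- p]] for [r] with its [l]-th coordinate replaced by that of [p].
   Expanding the entry x_r as the sum of the entries of the finer margin A_J that
   refine it shows that x_r x_p - x_{r[l <- p]} x_{p[l <- r]} is a sum of 2x2 minors
   of A_J whenever supp r is contained in supp p = J and l is in supp r.
   Membership of X_al X_be - X_ga X_de in Q means that for every j the pair
   (ga_j, de_j) is (al_j, be_j) or (be_j, al_j), so x_al x_be is turned into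
   x_ga x_de by exchanging the coordinates l in J' := J :&: supp be one at a time.
   As al and be lie in different margins no single minor performs such an
   exchange, but after multiplication by an entry x_s of A_J' it factors through
   three exchanges, in A_J, A_{supp be} and A_J again. *)

Set Implicit Arguments.
Unset Strict Implicit.

Import GRing.Theory.
Local Open Scope ring_scope.

Section GeneratedIdeal.

Variables (T : comNzRingType) (G : T -> Prop).

Lemma genI0 : genI T G 0.
Proof. by exists [::]; rewrite big_nil. Qed.

Lemma genI_gen p : G p -> genI T G p.
Proof.
move=> Gp; exists [:: (1, p)]; split; first by move=> q; rewrite inE => /eqP ->.
by rewrite big_seq1 mul1r.
Qed.

Lemma genID p q : genI T G p -> genI T G q -> genI T G (p + q).
Proof.
move=> [s [Gs ->]] [t [Gt ->]]; exists (s ++ t); split; last by rewrite big_cat.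
by move=> u; rewrite mem_cat => /orP[/Gs|/Gt].
Qed.

Lemma genIMl r p : genI T G p -> genI T G (r * p).
Proof.
move=> [s [Gs ->]]; exists [seq (r * q.1, q.2) | q <- s]; split.
  by move=> _ /mapP[q qs ->] /=; apply: Gs.
by rewrite big_map mulr_sumr; apply: eq_bigr => q _; rewrite mulrA.
Qed.

Lemma genIMr r p : genI T G p -> genI T G (p * r).
Proof. by rewrite mulrC; apply: genIMl. Qed.

Lemma genI_sum (I : finType) (P : pred I) (F : I -> T) :
  (forall i, P i -> genI T G (F i)) -> genI T G (\sum_(i | P i) F i).
Proof.
move=> GF; elim/big_rec: _ => [|i p Pi Gp]; first exact: genI0.
by apply: genID => //; apply: GF.
Qed.

End GeneratedIdeal.

Lemma genI_mulr (T : comNzRingType) (G G' : T -> Prop) t l :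
  (forall g, G g -> genI T G' (g * t)) -> genI T G l -> genI T G' (l * t).
Proof.
move=> GG' [s [Gs ->]]; rewrite mulr_suml big_seq.
elim/big_rec: _ => [|q p qs Gp]; first exact: genI0.
by apply: genID => //; rewrite -mulrA; apply/genIMl/GG'/Gs.
Qed.

Section Tuples.

Variables (n : nat) (a : 'I_n -> nat).
Implicit Types (s p q r t g d : tup n a) (c : cell n a) (J : {set 'I_n}).

Lemma suppE s j : (j \in supp n a s) = (s j != None).
Proof. by rewrite inE. Qed.

Lemma swapcE s r l j : swapc n a s r l j = if j == l then r j else s j.
Proof. by rewrite ffunE. Qed.

Lemma swapc_at s r l : swapc n a s r l l = r l.
Proof. by rewrite swapcE eqxx. Qed.

Lemma swapc_swapc s r t l : swapc n a (swapc n a s r l) t l = swapc n a s t l.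
Proof. by apply/ffunP => j; rewrite !swapcE; case: eqP. Qed.

Lemma swapc_id s r l : r l = s l -> swapc n a s r l = s.
Proof. by move=> rsl; apply/ffunP => j; rewrite swapcE; case: eqP => // ->. Qed.

Lemma eq_swapc s r r' l : r l = r' l -> swapc n a s r l = swapc n a s r' l.
Proof. by move=> rr'l; apply/ffunP => j; rewrite !swapcE; case: eqP => // ->. Qed.

Lemma supp_swapc s r l : l \in supp n a s -> l \in supp n a r ->
  supp n a (swapc n a s r l) = supp n a s.
Proof.
move=> ls lr; apply/setP => j; rewrite !suppE swapcE.
by case: (eqVneq j l) => [->|]; rewrite -?suppE ?ls ?lr.
Qed.

Lemma matchesP s c : reflect (forall j i, s j = Some i -> c j = i) (matches n a s c).
Proof.
apply: (iffP forallP) => [Hs j i sj|Hs j]; first by have := Hs j; rewrite sj => /eqP.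
by case sj: (s j) => [i|] //; rewrite (Hs j i sj).
Qed.

Definition refines t r : bool := [forall (j | j \in supp n a r), t j == r j].

Lemma refinesP t r : reflect (forall j, j \in supp n a r -> t j = r j) (refines t r).
Proof. by apply: (iffP forall_inP) => H j /H /eqP. Qed.

Lemma refines_swapc t r p l : t l = r l ->
  refines (swapc n a t p l) (swapc n a r p l) = refines t r.
Proof.
move=> trl; apply: eq_forallb => j; rewrite !suppE !swapcE.
by case: (eqVneq j l) => [->|_]; rewrite ?trl ?eqxx ?implybT.
Qed.

Definition restrict J c : tup n a := [ffun j => if j \in J then Some (c j) else None].

Lemma supp_restrict J c : supp n a (restrict J c) = J.
Proof. by apply/setP => j; rewrite suppE ffunE; case: ifP. Qed.

Lemma matches_restrict J t c : supp n a t = J -> (restrict J c == t) = matches n a t c.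
Proof.
move=> tJ; apply/eqP/matchesP => [<- j i|Hc].
  by rewrite ffunE; case: ifP => // _ [].
apply/ffunP => j; rewrite ffunE -tJ suppE.
by case tj: (t j) => [i|] //=; rewrite (Hc j i tj).
Qed.

Lemma refines_restrict J r c : supp n a r \subset J -> matches n a r c ->
  refines (restrict J c) r.
Proof.
move=> rJ /matchesP Hc; apply/refinesP => j jr.
rewrite ffunE (subsetP rJ j jr); move: jr; rewrite suppE.
by case rj: (r j) => [i|] //; rewrite (Hc j i rj).
Qed.

Lemma matches_refines t r c : refines t r -> matches n a t c -> matches n a r c.
Proof.
move=> /refinesP tr /matchesP Hc; apply/matchesP => j i rj.
by apply: Hc; rewrite tr // suppE rj.
Qed.

Definition coord_swap p q g d : Prop :=
  forall j, (g j = p j /\ d j = q j) \/ (g j = q j /\ d j = p j).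

Lemma coord_swap_eq p q g d : coord_swap p q g d -> g = p -> d = q.
Proof.
move=> pq gp; apply/ffunP => j.
by case: (pq j) => [[]|[gq ->]] //; rewrite -gq gp.
Qed.

Lemma coord_swap_swapc p q g d l : coord_swap p q g d ->
  coord_swap (swapc n a p q l) (swapc n a q p l) g d.
Proof.
move=> pq j; case: (eqVneq j l) => [->|jl]; last by rewrite !swapcE (negbTE jl).
by rewrite !swapc_at; case: (pq l) => -[-> ->]; [right|left].
Qed.

End Tuples.

Section Margins.

Variables (K : fieldType) (n : nat) (a : 'I_n -> nat) (D : {set {set 'I_n}}).
Implicit Types (s p q r t g d : tup n a) (J : {set 'I_n}).
Local Notation x := (xm K n a).

Lemma xm_refine r J : supp n a r \subset J ->
  x r = \sum_(t | (supp n a t == J) && refines t r) x t.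
Proof.
move=> rJ; rewrite /xm (partition_big (restrict J)
  (fun t => (supp n a t == J) && refines t r)); last first.
  by move=> c rc; rewrite supp_restrict eqxx refines_restrict.
apply: eq_bigr => t /andP[/eqP tJ tr]; apply: eq_bigl => c.
rewrite matches_restrict //; apply/andP/idP => [[]|tc] //.
by split=> //; apply: matches_refines tc.
Qed.

Lemma xm_refine_swapc p r J l : supp n a p = J -> supp n a r \subset J ->
  l \in supp n a r ->
  \sum_(t | (supp n a t == J) && refines t r) x (swapc n a t p l) = x (swapc n a r p l).
Proof.
move=> pJ rJ lr; have lp : l \in supp n a p by rewrite pJ (subsetP rJ).
rewrite (@xm_refine _ J); last by rewrite supp_swapc.
(* [t |-> t[l <- p]] maps the refinements of [r] onto those of [r[l <- p]],
   with inverse [u |-> u[l <- r]] *)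
symmetry; rewrite (reindex_onto (fun t => swapc n a t p l) (fun u => swapc n a u r l)).
  2: by move=> u /andP[_ /refinesP ur]; rewrite swapc_swapc swapc_id // ur
       ?swapc_at // suppE swapc_at -suppE.
apply: eq_bigl => t; rewrite swapc_swapc.
have [trl|ntrl] := eqVneq (t l) (r l).
  have lt : l \in supp n a t by rewrite suppE trl -suppE.
  by rewrite supp_swapc // refines_swapc // swapc_id // eqxx andbT.
have -> : (swapc n a t r l == t) = false.
  by apply/negbTE/eqP => trt; move: ntrl; rewrite -{1}trt swapc_at eqxx.
by rewrite andbF; apply/esym/negbTE/andP => -[_ /refinesP tr]; rewrite tr ?eqxx in ntrl.
Qed.

Lemma minor2_IDelta J s r l : J \in D -> supp n a s = J -> supp n a r = J -> l \in J ->
  IDelta K n a D (minor2 K n a s r l).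
Proof.
move=> JD sJ rJ lJ; apply: genI_gen; exists J; split => //.
by apply: genI_gen; exists s, r, l; split.
Qed.

Lemma exchange_IDelta J p r l : J \in D -> supp n a p = J -> supp n a r \subset J ->
  l \in supp n a r ->
  IDelta K n a D (x r * x p - x (swapc n a r p l) * x (swapc n a p r l)).
Proof.
move=> JD pJ rJ lr; have lJ := subsetP rJ l lr.
rewrite {1}(xm_refine rJ) -(xm_refine_swapc pJ rJ lr) !mulr_suml -sumrB.
apply: genI_sum => t /andP[/eqP tJ /refinesP tr].
rewrite (@eq_swapc _ _ p r t l) ?tr // [_ * x (swapc n a p t l)]mulrC.
exact: (minor2_IDelta JD tJ pJ lJ).
Qed.

(* Modulo I_Delta: x_s x_p ~ x_{s[l <- p]} x_{p[l <- s]}, then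
   x_{s[l <- p]} x_q ~ x_{s[l <- q]} x_{q[l <- p]}, and finally
   x_{s[l <- q]} x_{p[l <- s]} ~ x_s x_{p[l <- q]}. *)
Lemma exchange_mul_IDelta J J' s p q l : J \in D -> J' \in D ->
  supp n a s = J :&: J' -> supp n a p = J -> supp n a q = J' -> l \in J :&: J' ->
  IDelta K n a D
    (x s * (x p * x q - x (swapc n a p q l) * x (swapc n a q p l))).
Proof.
move=> JD J'D sJJ' pJ qJ' lJJ'.
have ls : l \in supp n a s by rewrite sJJ'.
have lp : l \in supp n a p by rewrite pJ; case/setIP: lJJ'.
have lq : l \in supp n a q by rewrite qJ'; case/setIP: lJJ'.
set s1 := swapc n a s p l; set p1 := swapc n a p s l; set s2 := swapc n a s q l.
have sJ : supp n a s \subset J by rewrite sJJ' subsetIl.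
have s1J' : supp n a s1 \subset J' by rewrite supp_swapc // sJJ' subsetIr.
have s2J : supp n a s2 \subset J by rewrite supp_swapc // sJJ' subsetIl.
have p1J : supp n a p1 = J by rewrite supp_swapc.
have ls1 : l \in supp n a s1 by rewrite suppE swapc_at -suppE.
have ls2 : l \in supp n a s2 by rewrite suppE swapc_at -suppE.
have E1 := exchange_IDelta JD pJ sJ ls.
have E2 := exchange_IDelta J'D qJ' s1J' ls1.
have E3 := exchange_IDelta JD p1J s2J ls2.
rewrite swapc_swapc (@eq_swapc _ _ q s1 p) ?swapc_at // in E2.
rewrite swapc_swapc swapc_id ?swapc_at // swapc_swapc in E3.
rewrite (@eq_swapc _ _ p s2 q) ?swapc_at // in E3.
have -> : x s * (x p * x q - x (swapc n a p q l) * x (swapc n a q p l)) =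
  (x s * x p - x s1 * x p1) * x q + (x s1 * x q - x s2 * x (swapc n a q p l)) * x p1
  + (x s2 * x p1 - x s * x (swapc n a p q l)) * x (swapc n a q p l) by ring.
by apply: genID; [apply: genID|]; apply: genIMr.
Qed.

Lemma exchange_chain_IDelta J J' s g d p q : J \in D -> J' \in D ->
  supp n a s = J :&: J' -> supp n a g = J -> supp n a p = J -> supp n a q = J' ->
  coord_swap p q g d -> IDelta K n a D (x s * (x p * x q - x g * x d)).
Proof.
move=> JD J'D sJJ' gJ; have [k] := ubnP #|[set j | g j != p j]|.
elim: k p q => // k IH p q ltk pJ qJ' pq.
have [/setP g_p|[l]] := set_0Vmem [set j | g j != p j].
  have gp : g = p by apply/ffunP => j; have := g_p j; rewrite !inE => /negbFE/eqP.
  by rewrite gp (coord_swap_eq pq gp) subrr mulr0; apply: genI0.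
rewrite inE => gpl.
have [gql dpl] : g l = q l /\ d l = p l.
  by case: (pq l) => -[gl dl] //; rewrite gl eqxx in gpl.
have lp : l \in supp n a p.
  apply: contraTT gpl => lnp; move: lnp (lnp); rewrite {1}pJ -gJ !suppE !negbK.
  by move=> /eqP -> /eqP ->.
have lq : l \in supp n a q by rewrite suppE -gql -suppE gJ -pJ.
have lJJ' : l \in J :&: J' by rewrite inE -pJ -qJ' lp lq.
rewrite -[x p * x q](subrK (x (swapc n a p q l) * x (swapc n a q p l))) -addrA mulrDr.
apply: genID; first exact: exchange_mul_IDelta JD J'D sJJ' pJ qJ' lJJ'.
apply: IH; rewrite ?supp_swapc //; last exact: coord_swap_swapc.
have -> : [set j | g j != swapc n a p q l j] = [set j | g j != p j] :\ l.
  apply/setP => j; rewrite !inE swapcE.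
  by case: (eqVneq j l) => [->|]; rewrite ?gql ?eqxx.
by rewrite (cardsD1 l) inE gpl in ltk.
Qed.

End Margins.

Lemma mpolyX_inj (R : nzRingType) k :
  injective (fun m : 'X_{1..k} => 'X_[m] : {mpoly R[k]}).
Proof.
move=> m m' /(congr1 (mcoeff m)) /=; rewrite !mcoeffX eqxx.
by case: eqP => // _ /eqP; rewrite oner_eq0.
Qed.

Section Eta.

Variables (K : fieldType) (n : nat) (a : 'I_n -> nat).

Definition yrank j (v : option 'I_(a j)) : 'I_#|ytype n a| :=
  enum_rank (Tagged (fun j => option 'I_(a j)) v : ytype n a).

Definition ymon (s : tup n a) : 'X_{1..#|ytype n a|} :=
  (\sum_(j < n) U_(yrank (s j)))%MM.

Lemma eta_XS s : Defs.eta K n a (XS K n a s) = 'X_[ymon s].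
Proof.
rewrite /Defs.eta /XS mmapX mmap1U enum_rankK /ymon.
by rewrite (big_morph (fun m => 'X_[m] : Ypoly K n a) (@mpolyXD _ _) (@mpolyX0 _ _)).
Qed.

Lemma ymonE s j v : ymon s (yrank v) = (s j == v) :> nat.
Proof.
rewrite /ymon mnm_sumE (bigD1 j) //= big1 ?addn0.
  by rewrite mnm1E (inj_eq enum_rank_inj) eq_Tagged.
move=> i ij; rewrite mnm1E (inj_eq enum_rank_inj).
by apply/eqP; rewrite eqb0; apply: contra ij => /eqP/(congr1 tag) /= ->.
Qed.

Lemma inQ_coord_swap al be ga de :
  inQ K n a (XS K n a al * XS K n a be - XS K n a ga * XS K n a de) ->
  coord_swap al be ga de.
Proof.
rewrite /inQ /Defs.eta rmorphB !rmorphM /= -!/(Defs.eta K n a _) !eta_XS -!mpolyXD.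
move=> /eqP; rewrite subr_eq0 => /eqP/mpolyX_inj albe_gade j.
have count v : ((al j == v) + (be j == v) = (ga j == v) + (de j == v))%N.
  have := congr1 (fun m : 'X_{1..#|ytype n a|} => m (yrank v)) albe_gade.
  by rewrite /= !mnmDE !ymonE.
have := count (ga j); rewrite eqxx; have [alga|nalga] := eqVneq (al j) (ga j) => /= H.
  by left; split => //; have := count (de j); rewrite alga eqxx => /addnI; case: eqP.
have bega : be j = ga j by move: H; case: eqP.
right; split => //; have := count (al j); rewrite eqxx bega eq_sym (negbTE nalga) /=.
by case: eqP.
Qed.

End Eta.

Lemma tau_XS (K : fieldType) n a (s : tup n a) : tau K n a (XS K n a s) = xm K n a s.
Proof. by rewrite /tau /XS mmapX mmap1U enum_rankK. Qed.

Theorem lemma4p2 (K : fieldType) (n : nat) (a : 'I_n -> nat)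
  (a_pos : forall j, (0 < a j)%N)
  (D : {set {set 'I_n}}) (HD : simplicial n D)
  (al be ga de : tup n a) (J : {set 'I_n})
  (Hal : supp n a al \in D) (Hbe : supp n a be \in D)
  (Hga : supp n a ga \in D) (Hde : supp n a de \in D)
  (HalJ : supp n a al = J) (HgaJ : supp n a ga = J)
  (HQ : inQ K n a (XS K n a al * XS K n a be - XS K n a ga * XS K n a de)) :
  forall l : Rpoly K n a, Lmarg K n a (J :&: supp n a be) l ->
    IDelta K n a D (l * tau K n a (XS K n a al * XS K n a be - XS K n a ga * XS K n a de)).
Proof.
move=> l Ll; have JD : J \in D by rewrite -HalJ.
rewrite /tau rmorphB !rmorphM /= -!/(tau K n a _) !tau_XS.
apply: genI_mulr Ll => _ [s [sJbe ->]].
exact: exchange_chain_IDelta JD Hbe sJbe HgaJ HalJ erefl (inQ_coord_swap HQ).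
Qed.
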